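(* Assume the setting and hypotheses below (with $d=2$). For $x\in X$, $t\in\mathbb{R}^2$ and $N\in\mathbb{N}$ let $\ell(x,t,N)=\mathrm{Card}(n\in\{0,1,\dots,N\}:\|\tau_n(x)-t\|\le1)$. Then for each $p\in\mathbb{N}$ there is a constant $C_p$ such that for each $t\in\mathbb{R}^2$ and each integer $N\ge2$, $\int_X\ell^p(x,t,N)\,d\mu(x)\le C_p\ln^pN$.
   Context: Setting: $f:X\to X$ smooth map of a manifold preserving a probability $\mu$, ergodic, satisfying the CLT for smooth observables; $(G_t)_{t\in\mathbb{R}^2}$ an $\mathbb{R}^2$ action on a manifold $Y$ preserving a probability $\nu$ enjoying multiple exponential mixing of all orders; $\tau:X\to\mathbb{R}^2$ smooth with $\tau_n=\sum_{k=0}^{n-1}\tau\circ f^k$, satisfying the MMLLT (multiple mixing local limit theorem with a non-degenerate Gaussian density) and the anticoncentration large deviation bound: for every $s\ge1$ there are $K$ and a decreasing $\Theta$ with $\int_1^\infty\Theta(r)r^2dr<\infty$ such that for all integers $0=n_0<n_1<\dots<n_s$ and unit cubes $C_j$ centered at $c_j$ ($c_0=0$), $\mu(x:\tau_{n_j}(x)\in C_j,\ j=1,\dots,s)\le K\prod_{j=1}^s(n_j-n_{j-1})^{-1}\Theta\left(\max_j\frac{\|c_j-c_{j-1}\|}{\sqrt{n_j-n_{j-1}}}\right)$. *)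

From HB Require Import structures.
From mathcomp Require Import all_boot all_order all_algebra.
From mathcomp Require Import all_classical all_reals all_analysis.
Set Implicit Arguments. Unset Strict Implicit. Unset Printing Implicit Defensive.
Import Order.TTheory GRing.Theory Num.Theory.
Local Open Scope classical_set_scope.
Local Open Scope ring_scope.

Section Defs.
Context {d : measure_display} {X : measurableType d} {R : realType}.

Definition dist2 (u v : R * R) : R :=
  Num.sqrt ((u.1 - v.1) ^+ 2 + (u.2 - v.2) ^+ 2).

Definition birkhoff (f : X -> X) (tau : X -> R * R) (n : nat) (x : X) : R * R :=
  (\sum_(k < n) (tau (iter k f x)).1, \sum_(k < n) (tau (iter k f x)).2).

Definition unit_cube (c : R * R) : set (R * R) :=
  [set y | `|y.1 - c.1| <= 2^-1 /\ `|y.2 - c.2| <= 2^-1].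

Definition ell (f : X -> X) (tau : X -> R * R) (x : X) (t : R * R) (N : nat) : nat :=
  count (fun n => dist2 (birkhoff f tau n x) t <= 1) (iota 0 N.+1).

Definition measure_preserving (mu : probability X R) (f : X -> X) : Prop :=
  measurable_fun setT f /\
  forall A, measurable A -> mu (f @^-1` A) = mu A.

Definition ergodic (mu : probability X R) (f : X -> X) : Prop :=
  forall A, measurable A -> f @^-1` A = A -> mu A = 0%E \/ mu A = 1%E.

Definition anticoncentration (mu : probability X R) (f : X -> X)
    (tau : X -> R * R) : Prop :=
  forall s : nat, (1 <= s)%N ->
  exists (K : R) (Theta : R -> R),
    (forall a b : R, 0 <= a -> a <= b -> Theta b <= Theta a) /\
    (lebesgue_measure).-integrable `[1, +oo[%classic
        (fun r : R => (Theta r * r ^+ 2)%:E) /\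
    forall (n : nat -> nat) (c : nat -> R * R),
      n 0%N = 0%N -> c 0%N = (0, 0) ->
      (forall j, (j < s)%N -> (n j < n j.+1)%N) ->
      (mu [set x | forall j, (1 <= j <= s)%N ->
                     unit_cube (c j) (birkhoff f tau (n j) x)]
       <= (K * (\prod_(1 <= j < s.+1) ((n j - n j.-1)%:R)^-1)
             * Theta (\big[Num.max/0]_(1 <= j < s.+1)
                        (dist2 (c j) (c j.-1) / Num.sqrt ((n j - n j.-1)%:R))))%:E)%E.

End Defs.

(* Call m a visit of x when the Birkhoff sum tau_m(x) lies within distance 1 of t,
   and let T be the number of visits with 1 <= m <= N.  Then ell <= 1 + T and
   (1 + T)^p <= c_p (1 + C(T, p)), where C(T, p) counts the increasing p-chains
   m_1 < ... < m_p of visits.  The unit disc around t is covered by nine unit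
   squares, so the anticoncentration bound gives
   mu(m_1, ..., m_p are visits) <= 9^p M prod_j 1 / (m_j - m_(j-1)).
   Summing over chains one index at a time yields M 9^p H_N^p, where H_N is the
   harmonic sum, and H_N <= 1 + ln N. *)

From HB Require Import structures.
From mathcomp Require Import all_boot all_order all_algebra.
From mathcomp Require Import all_classical all_reals all_analysis.
From mathcomp Require Import measurable_realfun.
From mathcomp Require Import zify ring lra.
Set Implicit Arguments. Unset Strict Implicit. Unset Printing Implicit Defensive.
Import Order.TTheory GRing.Theory Num.Theory.
Local Open Scope classical_set_scope.
Local Open Scope ring_scope.

Section BinomialBounds.
Local Open Scope nat_scope.

Lemma expn_le_ffact k c z : k <= c -> c <= z -> z ^ k <= c ^ k * z ^_ k.
Proof.
elim: k => [|k IH] kc cz; first by rewrite ffactn0.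
rewrite ffactnSr !expnS.
have le_z : z <= c * (z - k) by nia.
have := leq_mul (IH (ltnW kc) cz) le_z.
nia.
Qed.

Lemma expn_le_binomial p z : (1 + z) ^ p <= (2 * p) ^ p * p`! * (1 + 'C(z, p)).
Proof.
rewrite mulnDr muln1; case: (ltnP z p) => [zp|pz].
  apply: leq_trans (leq_addr _ _).
  apply: (@leq_trans (p ^ p)); first by rewrite leq_exp2r; lia.
  rewrite expnMn -mulnA mulnC -mulnA leq_pmulr //.
  by rewrite muln_gt0 fact_gt0 expn_gt0.
apply: leq_trans (leq_addl _ _).
apply: (@leq_trans ((2 * z) ^ p)).
  by case: p pz => [|p] pz //; rewrite leq_exp2r; lia.
rewrite !expnMn -!mulnA leq_mul2l [p`! * _]mulnC bin_ffact.
by rewrite expn_le_ffact ?orbT.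
Qed.

Lemma sum_binomial_count (hit : pred nat) k a n :
  \sum_(a <= m < n) hit m * 'C(count hit (index_iota m.+1 n), k)
  = 'C(count hit (index_iota a n), k.+1).
Proof.
elim: {a}(n - a) {-2}a (erefl (n - a)) => [|l IH] a la.
  by rewrite big_geq ?/index_iota ?la ?bin0n //; lia.
have -> : index_iota a n = a :: index_iota a.+1 n.
  by rewrite /index_iota la; have -> : n - a.+1 = l by lia.
rewrite big_cons IH; last by lia.
by rewrite /=; case: (hit a); rewrite ?mul1n ?mul0n ?add1n // binS addnC.
Qed.

End BinomialBounds.

Section Harmonic.
Variable R : realType.

Lemma invS_le_ln_diff n : (0 < n)%N -> (n.+1%:R)^-1 <= ln (n.+1%:R) - ln (n%:R) :> R.
Proof.
move=> n_gt0.
have ratio : 1 + - (n.+1%:R)^-1 = n%:R / n.+1%:R :> R.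
  have n_pos : 0 < n%:R :> R by rewrite ltr0n.
  by rewrite -addn1 natrD; field; lra.
have inv_lt1 : (n.+1%:R)^-1 < 1 :> R by rewrite invf_lt1 ?ltr1n ?ltr0n.
have := @le_ln1Dx R (- (n.+1%:R)^-1); rewrite ltrN2 => /(_ inv_lt1).
rewrite ratio lnM ?lnV ?posrE ?invr_gt0 ?ltr0n //.
by rewrite -lerN2 opprB opprK.
Qed.

Lemma sum_harmonic_le_ln N : (0 < N)%N -> \sum_(i < N) harmonic i <= 1 + ln (N%:R) :> R.
Proof.
elim: N => [//|[|N] IH _]; first by rewrite big_ord1 /= ln1 invr1 addr0.
rewrite big_ord_recr /= (le_trans (lerD (IH isT) (invS_le_ln_diff (ltn0Sn N)))) //.
by rewrite addrAC -addrA subrK.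
Qed.

Lemma sum_subrange_le (F : nat -> R) a b c e : (forall i, 0 <= F i) ->
  (c <= a)%N -> (b <= e)%N -> \sum_(a <= i < b) F i <= \sum_(c <= i < e) F i.
Proof.
move=> F_ge0 ca be; case: (leqP b a) => [ba|ab]; first by rewrite big_geq ?sumr_ge0.
rewrite (@big_cat_nat _ _ _ a c e) ?(@big_cat_nat _ _ _ b a e) //=; last first.
- exact: leq_trans (ltnW ab) be.
- exact: ltnW.
by rewrite ler_wpDl ?ler_wpDr ?sumr_ge0.
Qed.

Lemma sum_inv_dist_le_harmonic l a N : (l < a)%N ->
  \sum_(a <= m < N.+1) ((m - l)%:R)^-1 <= \sum_(i < N) harmonic i :> R.
Proof.
move=> la; rewrite -(big_mkord xpredT).
have -> : \sum_(a <= m < N.+1) ((m - l)%:R)^-1 = \sum_(a <= m < N.+1) harmonic (m - l.+1)%N :> R.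
  by apply: eq_big_nat => m /andP [am _] /=; congr (_%:R^-1); lia.
apply: le_trans (sum_subrange_le _ la (leqnn _)) _ => [i|]; first exact: harmonic_ge0.
rewrite -[X in \sum_(X <= _ < _) _]add0n big_addn.
under eq_bigr do rewrite addnK.
by apply: sum_subrange_le; [exact: harmonic_ge0 | | lia].
Qed.

End Harmonic.

Section ChainWeight.
Variable R : realType.

Definition chain_weight (P : seq nat) : R :=
  \prod_(1 <= j < (size P).+1) ((nth 0%N (0%N :: P) j - nth 0%N (0%N :: P) j.-1)%:R)^-1.

Lemma chain_weight_ge0 P : 0 <= chain_weight P.
Proof. by apply: prodr_ge0 => j _; rewrite invr_ge0. Qed.

Lemma chain_weight_rcons P m :
  chain_weight (rcons P m) = chain_weight P * ((m - last 0%N P)%:R)^-1.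
Proof.
rewrite /chain_weight size_rcons big_nat_recr //= -rcons_cons; congr (_ * _).
  apply: eq_big_nat => j /andP [j1 j2].
  by rewrite !nth_rcons /= ifT ?ifT //; lia.
rewrite !nth_rcons /= ltnn eqxx ltnSn.
by have := nth_last 0%N (0%N :: P); rewrite /= => ->.
Qed.

End ChainWeight.

Lemma in_set_pred (T : Type) (b : pred T) x : (x \in [set y | b y]) = b x.
Proof. by apply/idP/idP; rewrite in_setE. Qed.

Section ChainCount.
Variables (T : Type) (R : realType) (hit : nat -> T -> bool) (N : nat).

Definition hits_all (P : seq nat) : set T := [set x | all (hit^~ x) P].

Fixpoint chain_count (k a : nat) (P : seq nat) : T -> R :=
  match k with
  | 0 => \1_(hits_all P)
  | k.+1 => fun x => \sum_(a <= m < N.+1) chain_count k m.+1 (rcons P m) x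
  end.

Lemma chain_count_ge0 k a P x : 0 <= chain_count k a P x.
Proof.
by elim: k a P => [|k IH] a P /=; [rewrite indicE | apply: sumr_ge0].
Qed.

Lemma chain_countE k a P x : chain_count k a P x
  = \1_(hits_all P) x * 'C(count (hit^~ x) (index_iota a N.+1), k)%:R.
Proof.
elim: k a P => [|k IH] a P /=; first by rewrite bin0 mulr1.
rewrite -sum_binomial_count natr_sum mulr_sumr; apply: eq_bigr => m _.
rewrite IH !indicE !in_set_pred all_rcons natrM mulrA.
by case: (hit m x); rewrite /= ?mulr1 ?mulr0 ?mul0r.
Qed.

Lemma count_pow_le_chain_count p x :
  (count (hit^~ x) (iota 0 N.+1))%:R ^+ p
  <= ((2 * p) ^ p * p`!)%:R * (1 + chain_count p 1 [::] x) :> R.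
Proof.
rewrite chain_countE indicE in_set_pred mul1r [1 + _]addrC natr1 -natrM -natrX ler_nat.
apply: leq_trans (expn_le_binomial _ _); case: p => [//|p].
by rewrite leq_exp2r //= /index_iota subSS subn0 leq_add2r leq_b1.
Qed.

End ChainCount.

Section ChainIntegral.
Context d (X : measurableType d) (R : realType) (mu : {measure set X -> \bar R}).
Variables (hit : nat -> X -> bool) (N p : nat) (M : R).
Hypothesis measurable_hit : forall m, measurable [set x | hit m x].

Lemma measurable_hits_all P : measurable (hits_all hit P).
Proof.
elim: P => [|m P IH]; first by rewrite (_ : hits_all _ _ = setT) //; apply/seteqP.
rewrite (_ : hits_all _ _ = [set x | hit m x] `&` hits_all hit P); first exact: measurableI.
by apply/seteqP; split => x /andP.
Qed.

Lemma measurable_chain_count k a P : measurable_fun setT (chain_count R hit N k a P).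
Proof.
elim: k a P => [|k IH] a P /=; first exact/measurable_indic/measurable_hits_all.
by apply: measurable_sum => m; exact: IH.
Qed.

Lemma measurable_count_hits s : measurable_fun setT (fun x => (count (hit^~ x) s)%:R : R).
Proof.
elim: s => [|m s IH]; first exact: measurable_cst.
rewrite (_ : (fun x => _) = \1_[set x | hit m x] \+ (fun x => (count (hit^~ x) s)%:R)).
  exact: measurable_funD.
by apply/funext => x; rewrite /= natrD indicE in_set_pred.
Qed.

Hypothesis M_ge0 : 0 <= M.
Hypothesis chain_bound : forall P, path ltn 0%N P -> size P = p ->
  (mu (hits_all hit P) <= (M * chain_weight R P)%:E)%E.

Lemma integral_chain_count_le k a P :
  path ltn 0%N P -> (last 0%N P < a)%N -> (size P + k)%N = p ->
  (\int[mu]_x (chain_count R hit N k a P x)%:E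
    <= (M * chain_weight R P * (\sum_(i < N) harmonic i) ^+ k)%:E)%E.
Proof.
set H := \sum_(i < N) harmonic i.
have H_ge0 : 0 <= H by apply: sumr_ge0 => i _; exact: harmonic_ge0.
elim: k a P => [|k IH] a P P_incr P_lt /= P_size.
  rewrite integral_indic //; last exact: measurable_hits_all.
  rewrite setIT expr0 mulr1.
  by apply: chain_bound; rewrite // -P_size addn0.
under eq_integral => x _ do rewrite -sumEFin.
rewrite ge0_integral_sum //; first last.
- by move=> m x _; rewrite lee_fin; exact: chain_count_ge0.
- by move=> m; apply/measurable_EFinP; exact: measurable_chain_count.
rewrite big_nat_cond; apply: le_trans.
  apply: lee_sum => m /andP [/andP [am _] _]; apply: (IH m.+1 (rcons P m)).
  - by rewrite rcons_path P_incr; exact: leq_trans P_lt am.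
  - by rewrite last_rcons.
  - by rewrite size_rcons; lia.
rewrite -big_nat_cond sumEFin lee_fin.
under eq_bigr => m _ do rewrite chain_weight_rcons mulrA mulrAC.
rewrite -mulr_sumr exprS [_ * (_ ^+ k)]mulrC mulrA.
apply: ler_wpM2l; last exact: sum_inv_dist_le_harmonic.
by rewrite !mulr_ge0 ?chain_weight_ge0 ?exprn_ge0.
Qed.

Hypothesis mu_setT : mu setT = 1%E.

Lemma integral_count_pow_le :
  (\int[mu]_x ((count (hit^~ x) (iota 0 N.+1))%:R ^+ p)%:E
    <= (((2 * p) ^ p * p`!)%:R * (1 + M * (\sum_(i < N) harmonic i) ^+ p))%:E)%E.
Proof.
set c : R := ((2 * p) ^ p * p`!)%:R.
set H := chain_count R hit N p 1 [::].
have H_ge0 x : 0 <= H x := chain_count_ge0 _ _ _ _ _ _ x.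
have mH : measurable_fun setT H := measurable_chain_count _ _ _.
have int_H : (\int[mu]_x (H x)%:E <= (M * (\sum_(i < N) harmonic i) ^+ p)%:E)%E.
  have := @integral_chain_count_le p 1 [::] isT isT erefl.
  by rewrite /chain_weight big_geq // mulr1.
have int_cH : (\int[mu]_x (c * (1 + H x))%:E = c%:E * (1 + \int[mu]_x (H x)%:E))%E.
  under eq_integral do rewrite EFinM EFinD.
  rewrite ge0_integralZl_EFin //; first last.
  - by apply/measurable_EFinP/measurable_funD => //; exact: measurable_cst.
  - by move=> x _; rewrite lee_fin addr_ge0.
  rewrite ge0_integralD //; first by rewrite integral_cst // mu_setT mule1.
  - by move=> x _; rewrite lee_fin.
  - exact/measurable_EFinP.
apply: le_trans
  (@ge0_le_integral _ _ _ mu _ measurableT _ (fun x => (c * (1 + H x))%:E) _ _ _ _) _.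
- by move=> x _; rewrite lee_fin exprn_ge0.
- exact/measurable_EFinP/measurable_funX/measurable_count_hits.
- apply/measurable_EFinP/measurable_funM; first exact: measurable_cst.
  by apply: measurable_funD => //; exact: measurable_cst.
- by move=> x _; rewrite lee_fin count_pow_le_chain_count.
rewrite int_cH EFinM EFinD; apply: lee_wpmul2l; first by rewrite lee_fin.
by rewrite leeD2l.
Qed.

End ChainIntegral.

Lemma sqrtr_le1 (R : rcfType) (x : R) : (Num.sqrt x <= 1) = (x <= 1).
Proof. by rewrite -{1}sqrtr1 ler_sqrt. Qed.

Lemma measurable_ler_cst d (X : measurableType d) (R : realType) (g : X -> R) (c : R) :
  measurable_fun setT g -> measurable [set x | g x <= c].
Proof.
move=> mg; rewrite -[X in measurable X]setTI.
exact: (measurable_fun_ler mg (measurable_cst c)) measurableT [set true] I.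
Qed.

Section Birkhoff.
Context d (X : measurableType d) (R : realType) (f : X -> X) (tau : X -> R * R).
Hypothesis measurable_f : measurable_fun setT f.
Hypothesis measurable_tau1 : measurable_fun setT (fun x => (tau x).1).
Hypothesis measurable_tau2 : measurable_fun setT (fun x => (tau x).2).

Lemma measurable_iter k : measurable_fun setT (iter k f).
Proof.
elim: k => [|k IH]; first exact: measurable_id.
exact: (measurableT_comp measurable_f IH).
Qed.

Lemma measurable_birkhoff1 n : measurable_fun setT (fun x => (birkhoff f tau n x).1).
Proof.
by apply: measurable_sum => k; exact: (measurableT_comp measurable_tau1 (measurable_iter k)).
Qed.

Lemma measurable_birkhoff2 n : measurable_fun setT (fun x => (birkhoff f tau n x).2).
Proof.
by apply: measurable_sum => k; exact: (measurableT_comp measurable_tau2 (measurable_iter k)).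
Qed.

Definition visit (t : R * R) (n : nat) (x : X) : bool := dist2 (birkhoff f tau n x) t <= 1.

Lemma measurable_visit t n : measurable [set x | visit t n x].
Proof.
rewrite /visit /dist2; under eq_set do rewrite sqrtr_le1.
apply: measurable_ler_cst.
by apply: measurable_funD; apply: measurable_funX; apply: measurable_funB => //;
  [exact: measurable_birkhoff1 | exact: measurable_birkhoff2].
Qed.

Lemma measurable_cube_visits (n : nat -> nat) (c : nat -> R * R) s :
  measurable [set x | forall j, (1 <= j <= s)%N -> unit_cube (c j) (birkhoff f tau (n j) x)].
Proof.
rewrite (_ : [set x | _] = \bigcap_j (if (1 <= j <= s)%N
   then [set x | `|(birkhoff f tau (n j) x).1 - (c j).1| <= 2^-1]
        `&` [set x | `|(birkhoff f tau (n j) x).2 - (c j).2| <= 2^-1]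
   else setT)).
  apply: bigcapT_measurable => j; case: ifP => _ //.
  by apply: measurableI; apply: measurable_ler_cst; apply: measurableT_comp => //;
    apply: measurable_funB => //; [exact: measurable_birkhoff1 | exact: measurable_birkhoff2].
apply/seteqP; split => x /= cube j; last by have := cube j I; case: ifP.
by case: ifP => // /cube.
Qed.

End Birkhoff.

Section CubeCover.
Variable R : realType.

Definition cube_offset (i : 'I_3) : R := i%:R - 1.

Definition nearest_offset (r : R) : 'I_3 :=
  if r < - 2^-1 then ord0 else if r <= 2^-1 then inord 1 else inord 2.

Lemma nearest_offsetP r : `|r| <= 1 -> `|r - cube_offset (nearest_offset r)| <= 2^-1.
Proof.
rewrite !ler_norml => /andP [r_ge r_le].
rewrite /nearest_offset /cube_offset.
case: ifP => [r_lt|/negbT]; first by rewrite /= mulr0n; apply/andP; split; lra.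
rewrite -leNgt => r_ge'; case: ifP => [r_le'|/negbT]; [|rewrite -ltNge => r_gt];
  by rewrite inordK //; apply/andP; split; lra.
Qed.

Definition cube_center (t : R * R) (w : 'I_3 * 'I_3) : R * R :=
  (t.1 + cube_offset w.1, t.2 + cube_offset w.2).

Definition nearest_cube (t u : R * R) : 'I_3 * 'I_3 :=
  (nearest_offset (u.1 - t.1), nearest_offset (u.2 - t.2)).

Lemma dist2_le1_norm (u t : R * R) :
  dist2 u t <= 1 -> `|u.1 - t.1| <= 1 /\ `|u.2 - t.2| <= 1.
Proof.
rewrite /dist2 sqrtr_le1 => le1.
have := sqr_ge0 (u.1 - t.1); have := sqr_ge0 (u.2 - t.2); move=> sq2 sq1.
by split; rewrite -(ler_pXn2r (n := 2)) ?nnegrE ?normr_ge0 // expr1n real_normK ?num_real; lra.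
Qed.

Lemma unit_cube_nearest (u t : R * R) :
  dist2 u t <= 1 -> unit_cube (cube_center t (nearest_cube t u)) u.
Proof.
move=> /dist2_le1_norm [le1 le2].
by split; rewrite /= opprD addrA; exact: nearest_offsetP.
Qed.

End CubeCover.

Lemma measure_le_card_cover d (T : measurableType d) (R : realType)
    (mu : {measure set T -> \bar R}) (W : finType) (S : W -> set T) (A : set T) (B : R) :
  measurable A -> (forall w, measurable (S w)) -> A `<=` \bigcup_w S w ->
  (forall w, (mu (S w) <= B%:E)%E) -> (mu A <= (#|W|%:R * B)%:E)%E.
Proof.
move=> mA mS AS SB.
pose F k := nth set0 [seq S w | w <- enum W] k.
have F_in k : (k < #|W|)%N -> exists w, F k = S w.
  by rewrite cardE -(size_map S) => /(mem_nth set0) /mapP [w _ Fk]; exists w.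
apply: le_trans (@content_subadditive _ _ _ mu A F #|W| _ mA _) _.
- by move=> k /= /F_in [w ->].
- move=> x /AS [w _ Swx]; rewrite -bigcup_mkord.
  exists (index w (enum W)); first by rewrite /= cardE index_mem mem_enum.
  by rewrite /F (nth_map w) ?nth_index ?index_mem ?mem_enum.
have -> : (#|W|%:R * B)%:E = (\sum_(k < #|W|) B%:E)%E.
  by rewrite sumEFin sumr_const card_ord mulr_natl.
by apply: lee_sum => k _; have [w ->] := F_in k (ltn_ord k); exact: SB.
Qed.

(* Indexed by s for s.+1 cubes: anticoncentration is only assumed for at least one cube. *)
Definition cube_visit_bound d (X : measurableType d) (R : realType)
    (mu : {measure set X -> \bar R}) (f : X -> X) (tau : X -> R * R) (s : nat) (M : R) :=
  forall (n : nat -> nat) (c : nat -> R * R),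
    n 0%N = 0%N -> c 0%N = (0, 0) -> (forall j, (j < s.+1)%N -> (n j < n j.+1)%N) ->
    (mu [set x | forall j, (1 <= j <= s.+1)%N -> unit_cube (c j) (birkhoff f tau (n j) x)]
     <= (M * \prod_(1 <= j < s.+2) ((n j - n j.-1)%:R)^-1)%:E)%E.

Lemma nonincreasing_integrable_ge0 (R : realType) (theta : R -> R) :
  (forall a b : R, 0 <= a -> a <= b -> theta b <= theta a) ->
  lebesgue_measure.-integrable `[1, +oo[%classic (fun r : R => (theta r * r ^+ 2)%:E) ->
  forall b, 0 <= b -> 0 <= theta b.
Proof.
move=> theta_decr /integrableP [mtheta theta_fin] b b_ge0; rewrite leNgt; apply/negP => theta_lt0.
set a := Num.max b 1.
have a_ge1 : 1 <= a by rewrite le_max lexx orbT.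
have sub1 : `[a, +oo[%classic `<=` `[1, +oo[%classic.
  by move=> r /=; rewrite !in_itv /= !andbT; exact: le_trans.
have mabs : measurable_fun (`[1, +oo[%classic : set R) (fun r => `|(theta r * r ^+ 2)%:E|%E).
  exact: measurableT_comp.
have tail_le : (\int[lebesgue_measure]_(r in `[a, +oo[%classic) (- theta b)%:E
    <= \int[lebesgue_measure]_(r in `[a, +oo[%classic) `|(theta r * r ^+ 2)%:E|)%E.
  apply: ge0_le_integral => //.
  - by move=> r _; rewrite lee_fin; lra.
  - exact: measurable_funS mabs.
  move=> r; rewrite /= in_itv /= andbT => ar.
  have r_ge1 : 1 <= r := le_trans a_ge1 ar.
  have theta_r : theta r <= theta b.
    by apply: theta_decr; rewrite // (le_trans _ ar) // le_max lexx.
  have r2_ge1 : 1 <= r ^+ 2 by rewrite expr_ge1 //; lra.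
  rewrite lee_fin normrM (ger0_norm (x := r ^+ 2)) ?ler0_norm; nra.
have tail_infty : (\int[lebesgue_measure]_(r in `[a, +oo[%classic) (- theta b)%:E = +oo)%E.
  rewrite integral_cst //= (lebesgue_measure_itv `[a, +oo[) /= ltry /= mulry gtr0_sg ?mul1e //.
  lra.
have := ge0_subset_integral lebesgue_measure (measurable_itv `[a, +oo[)
  (measurable_itv `[1, +oo[) mabs (fun x _ => abse_ge0 _) sub1.
move=> /(le_trans tail_le) /le_lt_trans /(_ theta_fin).
by rewrite tail_infty ltxx.
Qed.

Lemma anticoncentration_uniform d (X : measurableType d) (R : realType)
    (mu : probability X R) (f : X -> X) (tau : X -> R * R) (s : nat) :
  anticoncentration mu f tau ->
  exists2 M : R, 0 <= M & cube_visit_bound mu f tau s M.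
Proof.
move=> /(_ s.+1 isT) [K [theta [theta_decr [theta_int bound]]]].
have theta_ge0 := nonincreasing_integrable_ge0 theta_decr theta_int.
exists (`|K| * theta 0); first by rewrite mulr_ge0 ?theta_ge0.
move=> n c n0 c0 n_incr; apply: le_trans (bound n c n0 c0 n_incr) _; rewrite lee_fin.
set m := \big[Num.max/0]_(1 <= j < s.+2) _; set w := \prod_(1 <= j < s.+2) _.
have m_ge0 : 0 <= m by elim/big_rec: m => // j y _ y_ge0; rewrite le_max y_ge0 orbT.
have w_ge0 : 0 <= w by apply: prodr_ge0 => j _; rewrite invr_ge0.
rewrite [leLHS]mulrAC; apply: ler_wpM2r => //.
apply: le_trans (ler_wpM2r (theta_ge0 _ m_ge0) (ler_norm K)) _.
by apply: ler_wpM2l => //; exact: theta_decr.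
Qed.

Section VisitChains.
Context d (X : measurableType d) (R : realType) (mu : {measure set X -> \bar R}).
Variables (f : X -> X) (tau : X -> R * R) (s : nat) (M : R).
Hypothesis measurable_f : measurable_fun setT f.
Hypothesis measurable_tau1 : measurable_fun setT (fun x => (tau x).1).
Hypothesis measurable_tau2 : measurable_fun setT (fun x => (tau x).2).
Hypothesis cube_bound : cube_visit_bound mu f tau s M.

Lemma measure_visit_chain_le t P : path ltn 0%N P -> size P = s.+1 ->
  (mu (hits_all (visit f tau t) P) <= ((9 ^ s.+1)%:R * M * chain_weight R P)%:E)%E.
Proof.
move=> P_incr P_size.
pose n j := nth 0%N (0%N :: P) j.
pose W := {ffun 'I_s.+1 -> 'I_3 * 'I_3}.
pose center (w : W) j := if j is j'.+1 then cube_center t (w (inord j')) else (0, 0).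
have n_incr j : (j < s.+1)%N -> (n j < n j.+1)%N.
  move=> js; apply: (sorted_ltn_nth ltn_trans 0%N (P_incr : sorted ltn (0%N :: P)));
    by rewrite ?inE /= ?P_size // ltnW.
have -> : (9 ^ s.+1)%:R = #|W|%:R :> R by rewrite card_ffun card_prod !card_ord.
rewrite -mulrA; apply: (measure_le_card_cover (S := fun w =>
  [set x | forall j, (1 <= j <= s.+1)%N -> unit_cube (center w j) (birkhoff f tau (n j) x)])).
- exact/measurable_hits_all/measurable_visit.
- by move=> w; exact: measurable_cube_visits.
- move=> x /allP visits.
  exists [ffun i : 'I_s.+1 => nearest_cube t (birkhoff f tau (n i.+1) x)] => //.
  move=> [//|j] /andP [_ js]; rewrite /center ffunE inordK //.
  by apply/unit_cube_nearest/visits/mem_nth; rewrite P_size.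
- move=> w; apply: le_trans (@cube_bound n (center w) erefl erefl n_incr) _.
  by rewrite /chain_weight P_size.
Qed.

End VisitChains.

Lemma one_add_harmonic_pow_le_ln (R : realType) (M : R) p N : 0 <= M -> (2 <= N)%N ->
  1 + M * (\sum_(i < N) harmonic i) ^+ p
  <= ((ln 2)^-p + M * ((ln 2)^-1 + 1) ^+ p) * ln (N%:R) ^+ p.
Proof.
move=> M_ge0 N_ge2; set L := ln (N%:R : R).
have ln2_gt0 : 0 < ln 2 :> R by apply: ln_gt0; rewrite ltr1n.
have L_ge : ln 2 <= L by rewrite ler_ln ?posrE ?ltr0n ?ler_nat //; lia.
have L_ln2 : 1 <= (ln 2)^-1 * L by rewrite mulrC ler_pdivlMr // mul1r.
have H_ge0 : 0 <= \sum_(i < N) harmonic i :> R by apply: sumr_ge0 => i _; exact: harmonic_ge0.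
have H_le : \sum_(i < N) harmonic i <= ((ln 2)^-1 + 1) * L.
  apply: le_trans (sum_harmonic_le_ln _ _) _; first lia.
  by rewrite mulrDl mul1r lerD2r.
rewrite mulrDl -exprVn -exprMn; apply: lerD; first exact: exprn_ege1.
rewrite -mulrA -exprMn; apply: ler_wpM2l => //.
by apply: lerXn2r; rewrite // nnegrE (le_trans H_ge0 H_le).
Qed.

Theorem lemma3p3 (d : measure_display) (X : measurableType d) (R : realType)
  (mu : probability X R) (f : X -> X) (tau : X -> R * R)
  (hf : measure_preserving mu f) (herg : ergodic mu f)
  (htau1 : measurable_fun setT (fun x => (tau x).1))
  (htau2 : measurable_fun setT (fun x => (tau x).2))
  (hac : anticoncentration mu f tau) :
  forall p : nat, exists Cp : R, forall (t : R * R) (N : nat), (2 <= N)%N ->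
    (\int[mu]_x (((ell f tau x t N)%:R : R) ^+ p)%:E
       <= (Cp * (ln (N%:R : R)) ^+ p)%:E)%E.
Proof.
case=> [|p].
  exists 1 => t N _; rewrite expr0 mulr1.
  under eq_integral do rewrite expr0.
  by rewrite integral_cst // mul1e probability_le1.
have [M M_ge0 cube_bound] := anticoncentration_uniform p hac.
pose M9 : R := (9 ^ p.+1)%:R * M.
have M9_ge0 : 0 <= M9 by rewrite mulr_ge0.
pose c : R := ((2 * p.+1) ^ p.+1 * p.+1`!)%:R.
exists (c * ((ln 2)^-p.+1 + M9 * ((ln 2)^-1 + 1) ^+ p.+1)) => t N N_ge2.
have chain_bound := measure_visit_chain_le hf.1 htau1 htau2 cube_bound t.
(* [ell f tau x t N] unfolds to [count (visit f tau t ^~ x) (iota 0 N.+1)]. *)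
apply: le_trans (integral_count_pow_le N (measurable_visit hf.1 htau1 htau2 t) M9_ge0
  chain_bound (probability_setT mu)) _.
by rewrite lee_fin -mulrA ler_wpM2l // one_add_harmonic_pow_le_ln.
Qed.
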